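(* In the setting described in the context, the Sarovar–Milburn bound $F_M(\theta)\le C_\Upsilon(\theta)$ can be attained (i.e. there is a POVM $\{M_m\}$ with $F_M(\theta)=C_\Upsilon(\theta)$) only for channels satisfying $\langle w_j'(\theta)|w_k(\theta)\rangle=0$ for all $j,k$ with $p_j(\theta),p_k(\theta)>0$.
   Context: A one-parameter quantum channel is a map $\rho_0\mapsto\sum_k E_k(\theta)\rho_0E_k(\theta)^\dagger$ on density matrices on $\mathbb{C}^d$, with Kraus operators depending differentiably on real $\theta$ and $\sum_k E_k^\dagger E_k=I$. The input is a fixed pure state $\rho_0=|\psi_0\rangle\langle\psi_0|$. Canonical Kraus operators $\{\Upsilon_k(\theta)\}_{k=1}^d$: a differentiable Kraus representation of the same channel with $\mathrm{tr}\{\Upsilon_k\rho_0\Upsilon_j^\dagger\}=\delta_{jk}p_k(\theta)$. The output state is $\rho_{out}(\theta)=\sum_k p_k(\theta)|w_k(\theta)\rangle\langle w_k(\theta)|$, with $\{|w_k(\theta)\rangle\}$ an orthonormal basis differentiable in $\theta$ and $|w_k\rangle=p_k^{-1/2}\Upsilon_k|\psi_0\rangle$ when $p_k>0$. A prime denotes $d/d\theta$. $C_\Upsilon(\theta)=4\sum_k\mathrm{tr}\{\Upsilon_k'\rho_0\Upsilon_k'^\dagger\}$. For a POVM $\{M_m\}$ (Hermitian, nonnegative, summing to $I$), let $p_m(\theta)=\mathrm{tr}\{\rho_{out}(\theta)M_m\}$; the Fisher information is $F_M(\theta)=\sum_m p_m(\theta)^{-1}(p_m'(\theta))^2$ (sum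 over $m$ with $p_m>0$). *)

From HB Require Import structures.
From mathcomp Require Import all_boot all_order all_algebra.
From mathcomp Require Import complex.
From mathcomp Require Import all_classical all_reals all_analysis.
Set Implicit Arguments. Unset Strict Implicit. Unset Printing Implicit Defensive.
Import Order.TTheory GRing.Theory Num.Theory.
Local Open Scope ring_scope.
Local Open Scope complex_scope.

Section QDefs.
Variable R : realType.
Local Notation C := (R[i]).

Definition adj m n (A : 'M[C]_(m, n)) : 'M[C]_(n, m) := (map_mx (@conjc R) A)^T.

(** positive semidefinite (over C this forces Hermitian; we add it anyway
    where the paper says "Hermitian") *)
Definition hermitian n (A : 'M[C]_n) := adj A = A.
Definition psd n (A : 'M[C]_n) :=
  forall v : 'cV[C]_n, 0 <= (adj v *m A *m v) 0 0.
Definition density n (rho : 'M[C]_n) := hermitian rho /\ psd rho /\ \tr rho = 1.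

Definition mx_derivable m n (f : R -> 'M[C]_(m, n)) (t : R) :=
  forall i j, derivable (fun s => complex.Re (f s i j)) t 1 /\
              derivable (fun s => complex.Im (f s i j)) t 1.
Definition mx_derive m n (f : R -> 'M[C]_(m, n)) (t : R) : 'M[C]_(m, n) :=
  \matrix_(i, j) (derive1 (fun s => complex.Re (f s i j)) t +i* derive1 (fun s => complex.Im (f s i j)) t).

Definition kraus_apply n (I : finType) (E : I -> 'M[C]_n) (rho : 'M[C]_n) :=
  \sum_(k : I) E k *m rho *m adj (E k).
Definition trace_preserving n (I : finType) (E : I -> 'M[C]_n) :=
  \sum_(k : I) adj (E k) *m E k = 1%:M.

Definition povm n (I : finType) (M : I -> 'M[C]_n) :=
  (forall m, hermitian (M m) /\ psd (M m)) /\ \sum_(m : I) M m = 1%:M.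

Definition outcome_prob n (rho_out : R -> 'M[C]_n) (I : finType)
  (M : I -> 'M[C]_n) (m : I) (t : R) : R := complex.Re (\tr (rho_out t *m M m)).
Definition fisher_info n (rho_out : R -> 'M[C]_n) (I : finType)
  (M : I -> 'M[C]_n) (t : R) : R :=
  \sum_(m : I | 0 < outcome_prob rho_out M m t)
     (outcome_prob rho_out M m t)^-1 *
     (derive1 (outcome_prob rho_out M m) t) ^+ 2.

Definition C_Ups n (I : finType) (Ups : R -> I -> 'M[C]_n) (rho0 : 'M[C]_n)
  (t : R) : R :=
  4 * \sum_(k : I) complex.Re (\tr (mx_derive (fun s => Ups s k) t *m rho0 *m
                              adj (mx_derive (fun s => Ups s k) t))).

End QDefs.

(* Write v_l = Ups_l psi0 for the canonical Kraus vectors and u_l = v_l' for their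
   velocities, so that the output state is sum_l |v_l><v_l|, p_m' = 2 Re sum_l <u_l|M_m|v_l>
   and C_Ups = 4 sum_l |u_l|^2.  Rotating a pair (v_a, v_b) by a unitary does not change
   the output, so replacing u by u + s z, with z tangent to such a rotation, changes none
   of the p_m'; Cauchy-Schwarz for each M_m and sum_m M_m = 1 then give
   F_M <= 4 |u + s z|^2 for every real s.  If F_M = C_Ups = 4 |u|^2, the quadratic in s
   is minimal at s = 0, so Re <u, z> = 0 for all such z, i.e. <u_a|v_b> = <v_a|u_b>.
   Finally v_l = sigma_l w_l with sigma_l = sqrt p_l real: differentiating turns that
   symmetry into sigma_a sigma_b (<w_a'|w_b> - <w_a|w_b'>) = 0, while differentiating
   orthonormality gives <w_a'|w_b> + <w_a|w_b'> = 0. *)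

From Pilot Require Import Defs.
From HB Require Import structures.
From mathcomp Require Import all_boot all_order all_algebra.
From mathcomp Require Import complex.
From mathcomp Require Import all_classical all_reals all_analysis.
From mathcomp Require Import ring lra.
Import Order.TTheory GRing.Theory Num.Theory.
Local Open Scope ring_scope.
Local Open Scope complex_scope.

Set Implicit Arguments.
Unset Strict Implicit.
Unset Printing Implicit Defensive.

Section ComplexParts.
Variable R : realType.
Local Notation C := R[i].
Local Notation Re := (@complex.Re R).
Local Notation Im := (@complex.Im R).

Lemma cReD (a b : C) : Re (a + b) = Re a + Re b. Proof. by case: a; case: b. Qed.
Lemma cImD (a b : C) : Im (a + b) = Im a + Im b. Proof. by case: a; case: b. Qed.
Lemma cReN (a : C) : Re (- a) = - Re a. Proof. by case: a. Qed.
Lemma cReM (a b : C) : Re (a * b) = Re a * Re b - Im a * Im b.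
Proof. by case: a; case: b. Qed.
Lemma cImM (a b : C) : Im (a * b) = Re a * Im b + Im a * Re b.
Proof. by case: a => ? ?; case: b => ? ? /=; rewrite addrC. Qed.
Lemma cReJ (a : C) : Re (conjc a) = Re a. Proof. by case: a. Qed.
Lemma cImJ (a : C) : Im (conjc a) = - Im a. Proof. by case: a. Qed.

Lemma cRe_sum (I : finType) (P : pred I) (F : I -> C) :
  Re (\sum_(i | P i) F i) = \sum_(i | P i) Re (F i).
Proof. exact: (big_morph _ cReD). Qed.

Lemma Re_quadratic (a b b' c : C) (s : R) : Re b' = Re b ->
  Re (a + s%:C * b + s%:C * (b' + s%:C * c)) = Re a + 2 * s * Re b + s ^+ 2 * Re c.
Proof. by case: a b b' c => [? ?] [? ?] [? ?] [? ?] /= ->; ring. Qed.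

Lemma Re_add_shift (a b c : C) (s : R) : Re a = Re b -> Re c = 0 ->
  Re (a + b) = 2 * Re (b + s%:C * c).
Proof. by case: a b c => [? ?] [? ?] [? ?] /= -> ->; ring. Qed.

End ComplexParts.

Section Adjoint.
Variable R : realType.
Local Notation C := R[i].

Lemma adjE m n (A : 'M[C]_(m, n)) i j : adj A i j = conjc (A j i).
Proof. by rewrite !mxE. Qed.

Lemma adjM m n p (A : 'M[C]_(m, n)) (B : 'M[C]_(n, p)) : adj (A *m B) = adj B *m adj A.
Proof. by rewrite /adj map_mxM trmx_mul. Qed.

Lemma adjK m n (A : 'M[C]_(m, n)) : adj (adj A) = A.
Proof. by apply/matrixP => i j; rewrite !adjE conjcK. Qed.

Lemma adjD m n (A B : 'M[C]_(m, n)) : adj (A + B) = adj A + adj B.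
Proof. by apply/matrixP => i j; rewrite !adjE !mxE rmorphD. Qed.

Lemma adjN m n (A : 'M[C]_(m, n)) : adj (- A) = - adj A.
Proof. by apply/matrixP => i j; rewrite !adjE !mxE rmorphN. Qed.

Lemma adjZ m n (c : C) (A : 'M[C]_(m, n)) : adj (c *: A) = conjc c *: adj A.
Proof. by apply/matrixP => i j; rewrite !adjE !mxE rmorphM. Qed.

Lemma adj1 n : adj (1%:M : 'M[C]_n) = 1%:M.
Proof. by apply/matrixP => i j; rewrite adjE !mxE rmorph_nat eq_sym. Qed.

Lemma conjc_adj_mul m n p (A : 'M[C]_(m, n)) (B : 'M[C]_(m, p)) i j :
  conjc ((adj A *m B) i j) = (adj B *m A) j i.
Proof. by rewrite -adjE adjM adjK. Qed.

Lemma braket_self_le0 n (x : 'cV[C]_n) : (adj x *m x) 0 0 <= 0 -> x = 0.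
Proof.
move=> le0.
have ge0 i : true -> 0 <= conjc (x i 0) * x i 0 by rewrite mulrC mulcJ_ge0.
have : \sum_i conjc (x i 0) * x i 0 = 0.
  apply/eqP; rewrite eq_le sumr_ge0 // andbT.
  by move: le0; rewrite mxE; under eq_bigr do rewrite adjE.
move/(psumr_eq0P ge0) => x0; apply/matrixP => i j; rewrite ord1 mxE.
by move/eqP: (x0 i isT); rewrite mulf_eq0 conjc_eq0 orbb => /eqP.
Qed.

Lemma braket_real_combl (al be ga : R) k (x y z : 'cV[C]_k) :
  (adj (al%:C *: x + be%:C *: y) *m (ga%:C *: z)) 0 0 =
  al%:C * ga%:C * (adj x *m z) 0 0 + be%:C * ga%:C * (adj y *m z) 0 0.
Proof.
rewrite adjD !adjZ !conjc_real mulmxDl -!scalemxAl -!scalemxAr !scalerA.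
by rewrite [LHS]mxE [X in X + _]mxE [X in _ + X]mxE.
Qed.

Lemma braket_real_combr (al be ga : R) k (x y z : 'cV[C]_k) :
  (adj (ga%:C *: z) *m (al%:C *: x + be%:C *: y)) 0 0 =
  ga%:C * al%:C * (adj z *m x) 0 0 + ga%:C * be%:C * (adj z *m y) 0 0.
Proof.
rewrite adjZ conjc_real mulmxDr -!scalemxAl -!scalemxAr !scalerA.
by rewrite [LHS]mxE [X in X + _]mxE [X in _ + X]mxE.
Qed.

End Adjoint.

Section ComplexDerivative.
Variable R : realType.
Local Notation C := R[i].
Local Notation Re := (@complex.Re R).
Local Notation Im := (@complex.Im R).

Definition is_cderive (f : R -> C) (t : R) (df : C) :=
  is_derive t 1 (fun s => Re (f s)) (Re df) /\
  is_derive t 1 (fun s => Im (f s)) (Im df).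

Lemma is_cderive_ext f g t df :
  (forall s, f s = g s) -> is_cderive f t df -> is_cderive g t df.
Proof. by move=> fg; have -> : g = f by apply: funext => s; rewrite fg. Qed.

Lemma is_cderive_unique f t df df' :
  is_cderive f t df -> is_cderive f t df' -> df = df'.
Proof.
move=> [/@derive_val re /@derive_val im] [/@derive_val re' /@derive_val im'].
by apply/eqP; rewrite eq_complex -re -re' -im -im' !eqxx.
Qed.

Lemma is_cderive_cst (c : C) t : is_cderive (fun _ => c) t 0.
Proof. by split; apply: is_derive_cst. Qed.

Lemma is_cderiveD f g t df dg : is_cderive f t df -> is_cderive g t dg ->
  is_cderive (fun s => f s + g s) t (df + dg).
Proof.
move=> [f1 f2] [g1 g2]; split.
- have -> : (fun s => Re (f s + g s)) = (fun s => Re (f s)) + (fun s => Re (g s)).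
    by apply: funext => s; rewrite cReD.
  by rewrite cReD; apply: is_deriveD.
- have -> : (fun s => Im (f s + g s)) = (fun s => Im (f s)) + (fun s => Im (g s)).
    by apply: funext => s; rewrite cImD.
  by rewrite cImD; apply: is_deriveD.
Qed.

Lemma is_cderiveM f g t df dg : is_cderive f t df -> is_cderive g t dg ->
  is_cderive (fun s => f s * g s) t (df * g t + f t * dg).
Proof.
move=> [f1 f2] [g1 g2]; split.
- have -> : (fun s => Re (f s * g s)) = (fun s => Re (f s)) * (fun s => Re (g s))
       - (fun s => Im (f s)) * (fun s => Im (g s)).
    by apply: funext => s; rewrite cReM.
  apply: (is_derive_eq (is_deriveB (is_deriveM f1 g1) (is_deriveM f2 g2))).
  rewrite cReD !cReM /= -![_ *: _]/(_ * _); lra.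
- have -> : (fun s => Im (f s * g s)) = (fun s => Re (f s)) * (fun s => Im (g s))
       + (fun s => Im (f s)) * (fun s => Re (g s)).
    by apply: funext => s; rewrite cImM.
  apply: (is_derive_eq (is_deriveD (is_deriveM f1 g2) (is_deriveM f2 g1))).
  rewrite cImD !cImM /= -![_ *: _]/(_ * _); lra.
Qed.

Lemma is_cderiveJ f t df : is_cderive f t df -> is_cderive (fun s => conjc (f s)) t (conjc df).
Proof.
move=> [f1 f2]; split.
- have -> : (fun s => Re (conjc (f s))) = (fun s => Re (f s)).
    by apply: funext => s; rewrite cReJ.
  by rewrite cReJ.
- have -> : (fun s => Im (conjc (f s))) = - (fun s => Im (f s)).
    by apply: funext => s; rewrite cImJ.
  by rewrite cImJ; apply: is_deriveN.
Qed.

Lemma is_cderive_sum (J : Type) (r : seq J) (F : J -> R -> C) t (dF : J -> C) :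
  (forall i, is_cderive (F i) t (dF i)) ->
  is_cderive (fun s => \sum_(i <- r) F i s) t (\sum_(i <- r) dF i).
Proof.
move=> dFi; elim: r => [|i r IH].
  by rewrite big_nil; apply: (is_cderive_ext _ (is_cderive_cst 0 t)) => s; rewrite big_nil.
rewrite big_cons; apply: (is_cderive_ext _ (is_cderiveD (dFi i) IH)) => s.
by rewrite big_cons.
Qed.

Lemma is_cderive_real (f : R -> R) t : derivable f t 1 ->
  is_cderive (fun s => (f s)%:C) t ('D_1 f t)%:C.
Proof. by move=> /derivableP df; split=> //=; apply: is_derive_cst. Qed.

Definition is_mxderive m n (A : R -> 'M[C]_(m, n)) t (dA : 'M[C]_(m, n)) :=
  forall i j, is_cderive (fun s => A s i j) t (dA i j).

Lemma is_mxderive_ext m n (A B : R -> 'M[C]_(m, n)) t dA :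
  (forall s, A s = B s) -> is_mxderive A t dA -> is_mxderive B t dA.
Proof. by move=> AB dAij i j; apply: (is_cderive_ext _ (dAij i j)) => s; rewrite AB. Qed.

Lemma is_mxderive_unique m n (A : R -> 'M[C]_(m, n)) t dA dA' :
  is_mxderive A t dA -> is_mxderive A t dA' -> dA = dA'.
Proof. by move=> h h'; apply/matrixP => i j; apply: is_cderive_unique (h i j) (h' i j). Qed.

Lemma is_mxderive_cst m n (A : 'M[C]_(m, n)) t : is_mxderive (fun _ => A) t 0.
Proof. by move=> i j; rewrite mxE; apply: is_cderive_cst. Qed.

Lemma is_mxderiveM m n p (A : R -> 'M[C]_(m, n)) (B : R -> 'M[C]_(n, p)) t dA dB :
  is_mxderive A t dA -> is_mxderive B t dB ->
  is_mxderive (fun s => A s *m B s) t (dA *m B t + A t *m dB).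
Proof.
move=> hA hB i j; rewrite !mxE -big_split.
apply: (is_cderive_ext _ (is_cderive_sum _ (fun l => is_cderiveM (hA i l) (hB l j)))).
by move=> s; rewrite mxE.
Qed.

Lemma is_mxderiveZ m n (c : R -> C) (A : R -> 'M[C]_(m, n)) t dc dA :
  is_cderive c t dc -> is_mxderive A t dA ->
  is_mxderive (fun s => c s *: A s) t (dc *: A t + c t *: dA).
Proof.
move=> hc hA i j; rewrite !mxE.
by apply: (is_cderive_ext _ (is_cderiveM hc (hA i j))) => s; rewrite mxE.
Qed.

Lemma is_mxderive_adj m n (A : R -> 'M[C]_(m, n)) t dA :
  is_mxderive A t dA -> is_mxderive (fun s => adj (A s)) t (adj dA).
Proof.
move=> hA i j; rewrite adjE.
by apply: (is_cderive_ext _ (is_cderiveJ (hA j i))) => s; rewrite adjE.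
Qed.

Lemma mx_deriveP m n (A : R -> 'M[C]_(m, n)) t :
  mx_derivable A t -> is_mxderive A t (mx_derive A t).
Proof.
move=> dA i j; rewrite mxE; have [/derivableP re /derivableP im] := dA i j.
by split; rewrite /= derive1E.
Qed.

Lemma adj_mul_cst_derive m p q (A : R -> 'M[C]_(m, p)) (B : R -> 'M[C]_(m, q))
    t dA dB c :
  (forall s, adj (A s) *m B s = c) -> is_mxderive A t dA -> is_mxderive B t dB ->
  adj dA *m B t + adj (A t) *m dB = 0.
Proof.
move=> cst Ad Bd; apply: (is_mxderive_unique (is_mxderiveM (is_mxderive_adj Ad) Bd)).
exact: is_mxderive_ext (fun s => esym (cst s)) (is_mxderive_cst c t).
Qed.

End ComplexDerivative.

Lemma quadratic_ge0_linear_eq0 (R : realFieldType) (L Q : R) :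
  (forall s, 0 <= 2 * s * L + s ^+ 2 * Q) -> L = 0.
Proof.
move=> ge0; have := ge0 1; have := ge0 (-1); rewrite !expr2 => h1 h2.
have Q_ge0 : 0 <= Q by lra.
have := ge0 (- (L / (Q + 1))).
have : L / (Q + 1) * (Q + 1) = L by rewrite mulfVK // gt_eqF //; lra.
move: (L / (Q + 1)) => c e h.
have c0 : c = 0.
  have : c ^+ 2 * (Q + 2) <= 0 by rewrite -e in h; lra.
  rewrite pmulr_lle0; last by lra.
  by move=> c2_le0; apply/eqP; rewrite -sqrf_eq0 eq_le c2_le0 sqr_ge0.
by rewrite -e c0 mul0r.
Qed.

Lemma quadratic_ge0_sqr_div_le (R : realFieldType) (a b q : R) : 0 < q ->
  (forall s, 0 <= a + 2 * s * b + s ^+ 2 * q) -> b ^+ 2 / q <= a.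
Proof.
move=> q_gt0 ge0.
have cq : b / q * q = b by rewrite mulfVK // gt_eqF.
have -> : b ^+ 2 / q = b / q * b by rewrite expr2 mulrAC.
have := ge0 (- (b / q)); move: (b / q) cq => c cq.
have -> : (- c) ^+ 2 * q = c * b by rewrite sqrrN expr2 -mulrA cq.
lra.
Qed.

Section FamilyForm.
Variables (R : realType) (n : nat) (J : finType).
Local Notation C := R[i].
Local Notation Re := (@complex.Re R).
Implicit Types (x y z : J -> 'cV[C]_n) (G : 'M[C]_n).

(* Locked: otherwise unification unfolds the sum whenever a generic ring lemma is
   rewritten in a goal mentioning [sesq], which is prohibitively slow. *)
Fact sesq_key : unit. Proof. by []. Qed.
Definition sesq G x y : C := locked_with sesq_key (\sum_k (adj (x k) *m G *m y k) 0 0).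

Lemma sesqE G x y : sesq G x y = \sum_k (adj (x k) *m G *m y k) 0 0.
Proof. exact: unlock. Qed.

Definition shift x z (s : R) : J -> 'cV[C]_n := fun k => x k + s%:C *: z k.

(* Plain [hermitian] would denote MathComp's predicate on sesquilinear forms. *)
Lemma Re_sesqC G x y : Defs.hermitian G -> Re (sesq G x y) = Re (sesq G y x).
Proof.
move=> hG; rewrite -cReJ !sesqE rmorph_sum; congr Re; apply: eq_bigr => k _.
by rewrite -mulmxA [LHS]conjc_adj_mul adjM hG.
Qed.

Lemma Re_sesq_ge0 G x : psd G -> 0 <= Re (sesq G x x).
Proof.
move=> pG; have : 0 <= sesq G x x by rewrite sesqE; apply: sumr_ge0 => k _; apply: pG.
by rewrite lecE => /andP[].
Qed.

Lemma sesq_suml (I : finType) (M : I -> 'M[C]_n) x y :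
  \sum_m sesq (M m) x y = sesq (\sum_m M m) x y.
Proof.
rewrite sesqE; under eq_bigr do rewrite sesqE.
rewrite exchange_big; apply: eq_bigr => k _ /=.
by rewrite mulmx_sumr mulmx_suml summxE.
Qed.

Lemma sesq_shiftl G x z y s :
  sesq G (shift x z s) y = sesq G x y + s%:C * sesq G z y.
Proof.
rewrite !sesqE mulr_sumr -big_split; apply: eq_bigr => k _ /=.
by rewrite adjD adjZ conjc_real !mulmxDl -!scalemxAl !mxE.
Qed.

Lemma sesq_shiftr G x z y s :
  sesq G y (shift x z s) = sesq G y x + s%:C * sesq G y z.
Proof.
rewrite !sesqE mulr_sumr -big_split; apply: eq_bigr => k _ /=.
by rewrite mulmxDr -!scalemxAr !mxE.
Qed.

Lemma Re_sesq_shift G x z s : Defs.hermitian G ->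
  Re (sesq G (shift x z s) (shift x z s)) =
  Re (sesq G x x) + 2 * s * Re (sesq G x z) + s ^+ 2 * Re (sesq G z z).
Proof.
move=> hG; rewrite sesq_shiftl !sesq_shiftr.
exact: Re_quadratic (Re_sesqC z x hG).
Qed.

Lemma Re_sesq_CauchySchwarz G x y : Defs.hermitian G -> psd G -> 0 < Re (sesq G y y) ->
  Re (sesq G x y) ^+ 2 / Re (sesq G y y) <= Re (sesq G x x).
Proof.
move=> hG pG yy_gt0; apply: quadratic_ge0_sqr_div_le yy_gt0 _ => s.
by have := Re_sesq_ge0 (shift x y s) pG; rewrite Re_sesq_shift.
Qed.

End FamilyForm.

Section GaugeFreedom.
Variables (R : realType) (n : nat) (J : finType).
Local Notation C := R[i].
Local Notation Re := (@complex.Re R).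
Implicit Types (u v y : J -> 'cV[C]_n) (G : 'M[C]_n).

(* Tangent vector of the unitary rotation of the pair (v_a, v_b) generated by an
   anti-Hermitian matrix; such rotations of a Kraus family leave the channel output
   unchanged. *)
Definition gauge v (a b : J) (al : C) : J -> 'cV[C]_n :=
  fun k => ((k == a)%:R * al) *: v b - ((k == b)%:R * conjc al) *: v a.

Lemma sum_delta (a : J) (F : J -> C) : \sum_k (k == a)%:R * F k = F a.
Proof.
rewrite (bigD1 a) //= eqxx mul1r big1 ?addr0 // => k /negbTE ->.
by rewrite mul0r.
Qed.

Lemma sesq_gaugel G v y a b al : sesq G (gauge v a b al) y =
  conjc al * (adj (v b) *m G *m y a) 0 0 - al * (adj (v a) *m G *m y b) 0 0.
Proof.
have termE k : (adj (gauge v a b al k) *m G *m y k) 0 0 =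
    (k == a)%:R * (conjc al * (adj (v b) *m G *m y k) 0 0)
    - (k == b)%:R * (al * (adj (v a) *m G *m y k) 0 0).
  rewrite adjD adjN !adjZ !rmorphM /= conjcK !rmorph_nat.
  by rewrite !mulmxDl !mulNmx -!scalemxAl !mxE !mulrA.
by rewrite sesqE (eq_bigr _ (fun k _ => termE k)) sumrB !sum_delta.
Qed.

Lemma sesq_gauger G v y a b al : sesq G y (gauge v a b al) =
  al * (adj (y a) *m G *m v b) 0 0 - conjc al * (adj (y b) *m G *m v a) 0 0.
Proof.
have termE k : (adj (y k) *m G *m gauge v a b al k) 0 0 =
    (k == a)%:R * (al * (adj (y k) *m G *m v b) 0 0)
    - (k == b)%:R * (conjc al * (adj (y k) *m G *m v a) 0 0).
  by rewrite mulmxDr mulmxN -!scalemxAr !mxE !mulrA.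
by rewrite sesqE (eq_bigr _ (fun k _ => termE k)) sumrB !sum_delta.
Qed.

Lemma Re_sesq_gauge G v a b al : Defs.hermitian G -> Re (sesq G (gauge v a b al) v) = 0.
Proof.
move=> hG; rewrite sesq_gaugel.
have -> : (adj (v a) *m G *m v b) 0 0 = conjc ((adj (v b) *m G *m v a) 0 0).
  by rewrite -[in RHS]mulmxA conjc_adj_mul adjM hG.
set T := (adj (v b) *m G *m v a) 0 0.
have -> : al * conjc T = conjc (conjc al * T) by rewrite rmorphM /= conjcK.
by rewrite cReD cReN cReJ subrr.
Qed.

(* F_M for the output sum_k v_k v_k^* when each v_k moves with velocity u_k. *)
Definition family_fisher (I : finType) (M : I -> 'M[C]_n) v u : R :=
  \sum_(m | 0 < Re (sesq (M m) v v))
     (Re (sesq (M m) v v))^-1 * Re (sesq (M m) v u + sesq (M m) u v) ^+ 2.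

Lemma family_fisher_le_shift (I : finType) (M : I -> 'M[C]_n) v u z s :
  povm M -> (forall m, Re (sesq (M m) z v) = 0) ->
  family_fisher M v u <= 4 * Re (sesq 1%:M (shift u z s) (shift u z s)).
Proof.
move=> [hM sumM] zv0; set w := shift u z s.
have term_le m : 0 < Re (sesq (M m) v v) ->
    (Re (sesq (M m) v v))^-1 * Re (sesq (M m) v u + sesq (M m) u v) ^+ 2
    <= 4 * Re (sesq (M m) w w).
  have [hG pG] := hM m => vv_gt0.
  have -> : Re (sesq (M m) v u + sesq (M m) u v) = 2 * Re (sesq (M m) w v).
    by rewrite sesq_shiftl; apply: Re_add_shift (Re_sesqC v u hG) (zv0 m).
  have scale4 (q r c : R) : r ^+ 2 / q <= c -> q^-1 * (2 * r) ^+ 2 <= 4 * c.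
    move=> le_rc; have -> : q^-1 * (2 * r) ^+ 2 = 4 * (r ^+ 2 / q) by ring.
    by rewrite ler_pM2l.
  exact/scale4/Re_sesq_CauchySchwarz.
apply: (le_trans (ler_sum _ term_le)); rewrite -mulr_sumr ler_pM2l //.
rewrite -sumM -sesq_suml cRe_sum.
rewrite [X in _ <= X](bigID (fun m => 0 < Re (sesq (M m) v v))) /= lerDl.
by apply: sumr_ge0 => m _; apply: Re_sesq_ge0; exact: (hM m).2.
Qed.

Lemma family_fisher_attained_orth (I : finType) (M : I -> 'M[C]_n) v u z :
  povm M -> (forall m, Re (sesq (M m) z v) = 0) ->
  family_fisher M v u = 4 * Re (sesq 1%:M u u) -> Re (sesq 1%:M u z) = 0.
Proof.
move=> hM zv0 attained.
apply: (quadratic_ge0_linear_eq0 (Q := Re (sesq 1%:M z z))) => s.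
have := family_fisher_le_shift u s hM zv0.
by rewrite attained (Re_sesq_shift _ _ _ (adj1 R n)) ler_pM2l // -addrA lerDl.
Qed.

Lemma gauge_orth_sym u v a b :
  (forall al, Re (sesq 1%:M u (gauge v a b al)) = 0) ->
  (adj (u a) *m v b) 0 0 = (adj (v a) *m u b) 0 0.
Proof.
move=> orth; rewrite -[RHS]conjc_adj_mul; have := orth 1; have := orth 'i.
rewrite !sesq_gauger !mulmx1 rmorph1 !mul1r.
case: ((adj (u a) *m v b) 0 0) => x1 y1; case: ((adj (u b) *m v a) 0 0) => x2 y2.
move=> /= hi h1; apply/eqP; rewrite eq_complex /=; apply/andP; split; apply/eqP; lra.
Qed.

Lemma family_fisher_attained_sym (I : finType) (M : I -> 'M[C]_n) v u a b :
  povm M -> family_fisher M v u = 4 * Re (sesq 1%:M u u) ->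
  (adj (u a) *m v b) 0 0 = (adj (v a) *m u b) 0 0.
Proof.
move=> hM attained; apply: gauge_orth_sym => al.
apply: (family_fisher_attained_orth hM _ attained) => m.
exact/Re_sesq_gauge/(hM.1 m).1.
Qed.

End GaugeFreedom.

Section PureInput.
Variables (R : realType) (n : nat) (J : finType).
Local Notation C := R[i].
Local Notation Re := (@complex.Re R).

Lemma density_pure (psi : 'cV[C]_n) : adj psi *m psi = 1%:M -> density (psi *m adj psi).
Proof.
move=> normed; split; [|split].
- by rewrite /Defs.hermitian adjM adjK.
- move=> x; rewrite !mulmxA -(mulmxA (adj x *m psi)) -[adj psi *m x]adjK adjM adjK.
  by rewrite mxE big_ord1 adjE mulcJ_ge0.
- by rewrite mxtrace_mulC normed trace_mx11 mxE.
Qed.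

Lemma normalized_colinear (x y : 'cV[C]_n) (q : R) :
  adj y *m y = 1%:M -> (adj x *m x) 0 0 = q%:C ->
  (0 < q -> y = ((Num.sqrt q)^-1)%:C *: x) ->
  x = (Re ((adj y *m x) 0 0))%:C *: y /\ (0 < q -> Re ((adj y *m x) 0 0) != 0).
Proof.
move=> normed xx yE; case: (ltrP 0 q) => [q_gt0 | q_le0].
  have xE : x = (Num.sqrt q)%:C *: y.
    by rewrite (yE q_gt0) scalerA -rmorphM /= divff ?scale1r // gt_eqF ?sqrtr_gt0.
  have -> : Re ((adj y *m x) 0 0) = Num.sqrt q.
    by rewrite [in LHS]xE -scalemxAr normed !mxE /= mulr1 mul0r subr0.
  by split=> // _; rewrite gt_eqF ?sqrtr_gt0.
have -> : x = 0 by apply: braket_self_le0; rewrite xx lecR.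
by rewrite mulmx0 mxE /= scale0r.
Qed.

Lemma trace_pure_conj (U : 'M[C]_n) (psi : 'cV[C]_n) :
  \tr (U *m (psi *m adj psi) *m adj U) = (adj (U *m psi) *m (U *m psi)) 0 0.
Proof. by rewrite -trace_mx11 [in RHS]mxtrace_mulC adjM !mulmxA. Qed.

Lemma fisher_info_family (I : finType) (M : I -> 'M[C]_n) (v : R -> J -> 'cV[C]_n) u t :
  (forall l, is_mxderive (fun s => v s l) t (u l)) ->
  fisher_info (fun s => \sum_l v s l *m adj (v s l)) M t = family_fisher M (v t) u.
Proof.
move=> dv.
have probE m : outcome_prob (fun s => \sum_l v s l *m adj (v s l)) M m =
    fun s => Re (sesq (M m) (v s) (v s)).
  apply: funext => s; rewrite /outcome_prob sesqE mulmx_suml.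
  rewrite (big_morph _ (@mxtraceD _ n) (mxtrace0 _ n)) !cRe_sum; apply: eq_bigr => l _.
  by rewrite -mulmxA mxtrace_mulC trace_mx11.
have dprob m : is_cderive (fun s => sesq (M m) (v s) (v s)) t
    (sesq (M m) (v t) u + sesq (M m) u (v t)).
  apply: (is_cderive_ext (fun s => esym (sesqE (M m) (v s) (v s)))).
  rewrite !sesqE -big_split; apply: is_cderive_sum => l.
  have := is_mxderiveM (is_mxderiveM (is_mxderive_adj (dv l))
    (is_mxderive_cst (M m) t)) (dv l) 0 0.
  by rewrite mulmx0 addr0 mxE addrC.
apply: eq_big => m; first by rewrite probE.
by rewrite probE derive1E; have [/@derive_val -> _] := dprob m.
Qed.

Lemma C_Ups_pure (Ups : R -> J -> 'M[C]_n) (psi : 'cV[C]_n) t :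
  let u l := mx_derive (fun s => Ups s l) t *m psi in
  C_Ups Ups (psi *m adj psi) t = 4 * Re (sesq 1%:M u u).
Proof.
rewrite /C_Ups sesqE cRe_sum; congr (4 * _); apply: eq_bigr => l _.
by rewrite mulmx1 trace_pure_conj.
Qed.

End PureInput.

Lemma orthonormal_frame_derive_eq0 (R : realType) n (J : finType)
    (v w : R -> J -> 'cV[R[i]]_n) (sg : J -> R -> R) (u : J -> 'cV[R[i]]_n) t a b :
  (forall s i j, adj (w s i) *m w s j = (i == j)%:R%:M) ->
  (forall l, mx_derivable (fun s => w s l) t) ->
  (forall l, derivable (sg l) t 1) ->
  (forall s l, v s l = (sg l s)%:C *: w s l) ->
  (forall l, is_mxderive (fun s => v s l) t (u l)) ->
  (adj (u a) *m v t b) 0 0 = (adj (v t a) *m u b) 0 0 ->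
  sg a t != 0 -> sg b t != 0 ->
  (adj (mx_derive (fun s => w s a) t) *m w t b) 0 0 = 0.
Proof.
move=> onb dw dsg vE dv sym sa_neq0 sb_neq0.
pose w' l := mx_derive (fun s => w s l) t.
have uE l : u l = ('D_1 (sg l) t)%:C *: w t l + (sg l t)%:C *: w' l.
  apply: (is_mxderive_unique (dv l)).
  apply: (is_mxderive_ext (fun s => esym (vE s l))).
  exact: is_mxderiveZ (is_cderive_real (dsg l)) (mx_deriveP (dw l)).
have onb_entry i j : (adj (w t i) *m w t j) 0 0 = (i == j)%:R by rewrite onb mxE mulr1n.
set Y := (adj (w' a) *m w t b) 0 0; set Z := (adj (w t a) *m w' b) 0 0.
have YZ : Y + Z = 0.
  have -> : Y + Z = (adj (w' a) *m w t b + adj (w t a) *m w' b) 0 0 by rewrite mxE.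
  by rewrite (adj_mul_cst_derive (fun s => onb s a b) (mx_deriveP (dw a))
    (mx_deriveP (dw b))) mxE.
move: sym; rewrite !uE !vE braket_real_combl braket_real_combr !onb_entry -/Y -/Z.
have -> : ('D_1 (sg a) t)%:C * (sg b t)%:C * (a == b)%:R =
    (sg a t)%:C * ('D_1 (sg b) t)%:C * (a == b)%:R.
  by have [<- | _] := eqVneq a b; rewrite ?mulr0 // [_ * (sg a t)%:C]mulrC.
move/addrI => /eqP; rewrite -subr_eq0 -mulrBr.
have -> : Y - Z = Y *+ 2 by rewrite -[Z](addKr Y) YZ addr0 opprK mulr2n.
rewrite !mulf_eq0 !fmorph_eq0 (negbTE sa_neq0) (negbTE sb_neq0) /=.
by rewrite mulrn_eq0 => /eqP.
Qed.

Theorem theorem1 (R : realType) (d K : nat)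
  (* the channel, given by differentiable Kraus operators E_k(theta) *)
  (E : R -> 'I_K -> 'M[R[i]]_d)
  (hE_diff : forall (k : 'I_K) (t : R), mx_derivable (fun s => E s k) t)
  (hE_tp : forall t : R, trace_preserving (E t))
  (* pure input state rho0 = |psi0><psi0| *)
  (psi0 : 'cV[R[i]]_d) (hpsi0 : adj psi0 *m psi0 = 1%:M)
  (* canonical Kraus operators Ups_1..Ups_d: a differentiable Kraus
     representation of the same channel *)
  (Ups : R -> 'I_d -> 'M[R[i]]_d)
  (hUps_diff : forall (k : 'I_d) (t : R), mx_derivable (fun s => Ups s k) t)
  (hUps_same : forall (t : R) (rho : 'M[R[i]]_d),
      density rho -> kraus_apply (Ups t) rho = kraus_apply (E t) rho)
  (p : R -> 'I_d -> R)
  (hUps_canon : forall (t : R) (j k : 'I_d),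
      \tr (Ups t k *m (psi0 *m adj psi0) *m adj (Ups t j))
      = (j == k)%:R * (p t k)%:C)
  (* the differentiable orthonormal eigenbasis |w_k(theta)> *)
  (w : R -> 'I_d -> 'cV[R[i]]_d)
  (hw_on : forall (t : R) (j k : 'I_d), adj (w t j) *m w t k = (j == k)%:R%:M)
  (hw_diff : forall (k : 'I_d) (t : R), mx_derivable (fun s => w s k) t)
  (hw_def : forall (t : R) (k : 'I_d), 0 < p t k ->
      w t k = ((Num.sqrt (p t k))^-1)%:C *: (Ups t k *m psi0))
  (* a parameter value and a POVM attaining the Sarovar--Milburn bound *)
  (theta : R) (I : finType) (M : I -> 'M[R[i]]_d) (hM : povm M)
  (hatt : fisher_info (fun t => kraus_apply (E t) (psi0 *m adj psi0)) M theta
          = C_Ups Ups (psi0 *m adj psi0) theta) :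
  forall j k : 'I_d, 0 < p theta j -> 0 < p theta k ->
    (adj (mx_derive (fun s => w s j) theta) *m w theta k) 0 0 = 0.
Proof.
move=> j k pj pk.
pose v t l := Ups t l *m psi0.
pose u l := mx_derive (fun s => Ups s l) theta *m psi0.
have dv l : is_mxderive (fun s => v s l) theta (u l).
  have := is_mxderiveM (mx_deriveP (hUps_diff l theta)) (is_mxderive_cst psi0 theta).
  by rewrite mulmx0 addr0.
have outE : (fun t => kraus_apply (E t) (psi0 *m adj psi0)) =
    (fun t => \sum_l v t l *m adj (v t l)).
  apply: funext => t; rewrite -hUps_same; last exact: density_pure.
  by apply: eq_bigr => l _; rewrite adjM !mulmxA.
have sym a b : (adj (u a) *m v theta b) 0 0 = (adj (v theta a) *m u b) 0 0.
  apply: (family_fisher_attained_sym _ _ hM).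
  by rewrite -(fisher_info_family M dv) -outE hatt C_Ups_pure.
(* sg l t is sqrt (p t l), or 0 where p t l = 0. *)
pose sg l t := complex.Re ((adj (w t l) *m v t l) 0 0).
have colin t l : v t l = (sg l t)%:C *: w t l /\ (0 < p t l -> sg l t != 0).
  apply: normalized_colinear (hw_def t l); first by rewrite hw_on eqxx.
  by rewrite -trace_pure_conj hUps_canon eqxx mul1r.
have dsg l : derivable (sg l) theta 1.
  have [dre _] := is_mxderiveM (is_mxderive_adj (mx_deriveP (hw_diff l theta))) (dv l) 0 0.
  exact: ex_derive.
exact: (orthonormal_frame_derive_eq0 hw_on (fun l => hw_diff l theta) dsg
  (fun t l => (colin t l).1) dv (sym j k) ((colin theta j).2 pj) ((colin theta k).2 pk)).
Qed.
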